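(* Let $\sigma_\rho>0$ and let $W$ follow the unit-log-Laplace distribution, i.e. $W$ has PDF $$f_W(w;\sigma_\rho)=\frac{1}{w(1-w)\sigma_\rho}\,f_\ell(A(w)),\qquad 0<w<1,$$ where $f_\ell(x)=\frac{1}{\sqrt2}\exp(-\sqrt2|x|)$ is the PDF of the Laplace distribution with location $0$ and scale $1/\sqrt2$, and $A(w)=\frac{1}{\sigma_\rho}\log\frac{w}{1-w}$. If $\sigma_\rho\le\sqrt2$, then $f_W(\cdot;\sigma_\rho)$ is unimodal with mode $w_0=1/2$. If $\sigma_\rho>\sqrt2$, then $f_W(\cdot;\sigma_\rho)$ is decreasing-increasing-decreasing-increasing with minimum points $$w_-=\frac{1}{1+\exp\big(2\,{\rm arctanh}(\sqrt2/\sigma_\rho)\big)},\qquad w_+=\frac{1}{1+\exp\big(-2\,{\rm arctanh}(\sqrt2/\sigma_\rho)\big)},$$ and maximum point $w_0=1/2$, with $0<w_-<w_0<w_+<1$. Moreover, $f_W(\cdot;\sigma_\rho)$ is not differentiable at $w_0=1/2$ and is symmetric around $w_0=1/2$.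
   Context: This is the unit-log-symmetric distribution ${\rm ULS}(\sigma_\rho,g_c)$ with density generator $g_c(x)=K_0(\sqrt{2x})$, where $K_0(u)=\frac12\int_0^\infty t^{-1}\exp(-t-\frac{u^2}{4t})\,{\rm d}t$ and $\sigma_\rho=\sigma\sqrt{2(1-\rho)}$; for this generator the ULS PDF reduces to the displayed formula. *)

From Stdlib Require Import Reals.
From Coquelicot Require Import Coquelicot.
Open Scope R_scope.

Definition arctanh (x : R) : R := / 2 * ln ((1 + x) / (1 - x)).

Definition f_ell (x : R) : R := / sqrt 2 * exp (- (sqrt 2 * Rabs x)).

Definition A_ul (sigma w : R) : R := / sigma * ln (w / (1 - w)).

Definition fW (sigma w : R) : R := / (w * (1 - w) * sigma) * f_ell (A_ul sigma w).

Definition w_minus (sigma : R) : R := / (1 + exp (2 * arctanh (sqrt 2 / sigma))).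
Definition w_plus (sigma : R) : R := / (1 + exp (- (2 * arctanh (sqrt 2 / sigma)))).

(* On [1/2, 1) the absolute value in f_ell is resolved and, with c = sqrt 2 / sigma,
   fW(w) = w^{-(1+c)} (1-w)^{c-1} / (sigma sqrt 2).  The logarithm of this branch has
   derivative (2w - (1+c)) / (w(1-w)), so fW decreases up to (1+c)/2 and increases after
   it; the point (1+c)/2 lies in (1/2, 1) exactly when c < 1, and then it is w_plus.
   Symmetry w <-> 1-w transfers everything to (0, 1/2], with w_minus = (1-c)/2.  At 1/2 a derivative would have
   to vanish by symmetry, while the right branch has a nonzero slope there. *)

From Stdlib Require Import Reals Lra.
From Coquelicot Require Import Coquelicot.
Open Scope R_scope.

Lemma strict_increasing_of_derive (f f' : R -> R) (x y : R) : x < y ->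
  (forall z, x <= z <= y -> is_derive f z (f' z)) ->
  (forall z, x < z < y -> 0 < f' z) -> f x < f y.
Proof.
  intros hxy hder hpos.
  destruct (MVT_cor2 f f' x y hxy) as [z [e hz]].
  - intros z hz. now apply is_derive_Reals, hder.
  - specialize (hpos z hz). nra.
Qed.

Lemma strict_decreasing_of_derive (f f' : R -> R) (x y : R) : x < y ->
  (forall z, x <= z <= y -> is_derive f z (f' z)) ->
  (forall z, x < z < y -> f' z < 0) -> f y < f x.
Proof.
  intros hxy hder hneg.
  destruct (MVT_cor2 f f' x y hxy) as [z [e hz]].
  - intros z hz. now apply is_derive_Reals, hder.
  - specialize (hneg z hz). nra.
Qed.

Lemma derivable_pt_lim_eq0_of_right_eq0 (h : R -> R) (x l r : R) : 0 < r ->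
  (forall t, 0 <= t < r -> h (x + t) = 0) -> derivable_pt_lim h x l -> l = 0.
Proof.
  intros hr hzero hlim.
  destruct (Req_dec l 0) as [|hl]; [assumption | exfalso].
  destruct (hlim (Rabs l) (Rabs_pos_lt l hl)) as [[d hd] hquot]; simpl in hquot.
  set (t := Rmin d r / 2).
  assert (ht : 0 < t < r /\ t < d).
  { unfold t. pose proof (Rmin_l d r). pose proof (Rmin_r d r).
    assert (0 < Rmin d r) by now apply Rmin_pos. lra. }
  specialize (hquot t ltac:(lra) ltac:(rewrite Rabs_pos_eq; lra)).
  assert (hx : h x = 0) by (rewrite <- (Rplus_0_r x); apply hzero; lra).
  rewrite hzero, hx in hquot by lra.
  unfold Rdiv in hquot. rewrite Rminus_0_r, Rmult_0_l, Rminus_0_l, Rabs_Ropp in hquot.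
  lra.
Qed.

Lemma is_derive_eq_of_right_eq (f g : R -> R) (x r a b : R) : 0 < r ->
  (forall t, 0 <= t < r -> f (x + t) = g (x + t)) ->
  is_derive f x a -> is_derive g x b -> a = b.
Proof.
  intros hr hfg hf hg.
  apply is_derive_Reals in hf. apply is_derive_Reals in hg.
  enough (a - b = 0) by lra.
  apply (derivable_pt_lim_eq0_of_right_eq0 (f - g)%F x _ r hr).
  - intros t ht. unfold minus_fct. rewrite hfg by exact ht. ring.
  - now apply derivable_pt_lim_minus.
Qed.

Lemma is_derive_reflection_symmetric (f : R -> R) (a d : R) :
  locally a (fun t => f (2 * a - t) = f t) -> is_derive f a d -> d = 0.
Proof.
  intros hsym hf.
  assert (hrefl : is_derive (fun t => f (2 * a - t)) a (- d)).
  { replace (- d) with (scal (-1) d) by (unfold scal; simpl; unfold mult; simpl; ring).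
    apply (is_derive_comp f (fun t => 2 * a - t)).
    - now replace (2 * a - a) with a by ring.
    - auto_derive; [easy | ring]. }
  apply (is_derive_ext_loc _ _ _ _ hsym) in hrefl.
  apply is_derive_unique in hf. apply is_derive_unique in hrefl.
  lra.
Qed.

Lemma exp_2arctanh c : -1 < c < 1 -> exp (2 * arctanh c) = (1 + c) / (1 - c).
Proof.
  intros hc. unfold arctanh.
  replace (2 * (/ 2 * ln ((1 + c) / (1 - c)))) with (ln ((1 + c) / (1 - c))) by field.
  apply exp_ln, Rdiv_lt_0_compat; lra.
Qed.

Lemma inv_1_plus_exp_2arctanh c : -1 < c < 1 -> / (1 + exp (2 * arctanh c)) = (1 - c) / 2.
Proof.
  intros hc. rewrite exp_2arctanh by exact hc. field. lra.
Qed.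

Lemma inv_1_plus_exp_opp_2arctanh c : -1 < c < 1 ->
  / (1 + exp (- (2 * arctanh c))) = (1 + c) / 2.
Proof.
  intros hc. rewrite exp_Ropp, exp_2arctanh by exact hc. field. lra.
Qed.

Lemma fW_sym sigma w : 0 < w < 1 -> fW sigma (1 - w) = fW sigma w.
Proof.
  intros hw. unfold fW, f_ell, A_ul.
  replace (1 - (1 - w)) with w by ring.
  replace ((1 - w) / w) with (/ (w / (1 - w))) by (field; lra).
  rewrite ln_Rinv by (apply Rdiv_lt_0_compat; lra).
  rewrite Ropp_mult_distr_r_reverse, Rabs_Ropp, (Rmult_comm (1 - w) w).
  reflexivity.
Qed.

Definition log_branch (c w : R) : R := - (1 + c) * ln w + (c - 1) * ln (1 - w).

Lemma is_derive_log_branch c w : 0 < w < 1 ->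
  is_derive (log_branch c) w ((2 * w - (1 + c)) / (w * (1 - w))).
Proof.
  intros hw. unfold log_branch. auto_derive; [lra | field; lra].
Qed.

Lemma log_branch_decreasing c x y : 0 < x -> x < y -> y < 1 -> y <= (1 + c) / 2 ->
  log_branch c y < log_branch c x.
Proof.
  intros hx hxy hy hyc.
  apply (strict_decreasing_of_derive _ (fun z => (2 * z - (1 + c)) / (z * (1 - z))) x y hxy).
  - intros z hz. apply is_derive_log_branch. lra.
  - intros z hz. apply Rdiv_neg_pos; [lra | apply Rmult_lt_0_compat; lra].
Qed.

Lemma log_branch_increasing c x y : (1 + c) / 2 <= x -> 0 < x -> x < y -> y < 1 ->
  log_branch c x < log_branch c y.
Proof.
  intros hxc hx hxy hy.
  apply (strict_increasing_of_derive _ (fun z => (2 * z - (1 + c)) / (z * (1 - z))) x y hxy).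
  - intros z hz. apply is_derive_log_branch. lra.
  - intros z hz. apply Rdiv_lt_0_compat; [lra | apply Rmult_lt_0_compat; lra].
Qed.

Section Density.

Variable sigma : R.
Hypothesis hs : 0 < sigma.

Let sqrt2_pos : 0 < sqrt 2.
Proof. apply sqrt_lt_R0; lra. Qed.

Lemma fW_right_branch w : / 2 <= w < 1 ->
  fW sigma w = / (sigma * sqrt 2) * exp (log_branch (sqrt 2 / sigma) w).
Proof.
  intros hw.
  assert (hratio : 0 <= ln (w / (1 - w))).
  { rewrite <- ln_1. apply ln_le; [lra |].
    apply (Rmult_le_reg_r (1 - w)); [lra |].
    unfold Rdiv. rewrite Rmult_assoc, Rinv_l; lra. }
  unfold fW, f_ell, A_ul, log_branch.
  rewrite Rabs_pos_eq by (apply Rmult_le_pos; [left; apply Rinv_0_lt_compat |]; lra).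
  rewrite ln_div by lra.
  replace (- (1 + sqrt 2 / sigma) * ln w + (sqrt 2 / sigma - 1) * ln (1 - w))
    with (- ln w + - ln (1 - w) + - (sqrt 2 * (/ sigma * (ln w - ln (1 - w)))))
    by (field; lra).
  rewrite !exp_plus, !exp_Ropp, !exp_ln by lra.
  field. pose proof (exp_pos (sqrt 2 * (/ sigma * (ln w - ln (1 - w))))). repeat split; lra.
Qed.

Lemma fW_right_decreasing x y : / 2 <= x -> x < y -> y < 1 ->
  y <= (1 + sqrt 2 / sigma) / 2 -> fW sigma y < fW sigma x.
Proof.
  intros hx hxy hy hyc.
  rewrite !fW_right_branch by lra.
  apply Rmult_lt_compat_l; [apply Rinv_0_lt_compat, Rmult_lt_0_compat; lra |].
  apply exp_increasing, log_branch_decreasing; lra.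
Qed.

Lemma fW_right_increasing x y : (1 + sqrt 2 / sigma) / 2 <= x -> / 2 <= x -> x < y -> y < 1 ->
  fW sigma x < fW sigma y.
Proof.
  intros hxc hx hxy hy.
  rewrite !fW_right_branch by lra.
  apply Rmult_lt_compat_l; [apply Rinv_0_lt_compat, Rmult_lt_0_compat; lra |].
  apply exp_increasing, log_branch_increasing; lra.
Qed.

Lemma fW_left_increasing x y : 0 < x -> (1 - sqrt 2 / sigma) / 2 <= x -> x < y -> y <= / 2 ->
  fW sigma x < fW sigma y.
Proof.
  intros hx hxc hxy hy.
  rewrite <- (fW_sym sigma x), <- (fW_sym sigma y) by lra.
  apply fW_right_decreasing; lra.
Qed.

Lemma fW_left_decreasing x y : 0 < x -> x < y -> y <= (1 - sqrt 2 / sigma) / 2 ->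
  y <= / 2 -> fW sigma y < fW sigma x.
Proof.
  intros hx hxy hyc hy.
  rewrite <- (fW_sym sigma x), <- (fW_sym sigma y) by lra.
  apply fW_right_increasing; lra.
Qed.

Lemma fW_not_derivable_half : ~ ex_derive (fW sigma) (/ 2).
Proof.
  intros [d hd].
  set (c := sqrt 2 / sigma).
  assert (hc : 0 < c) by (apply Rdiv_lt_0_compat; lra).
  set (F := fun w => / (sigma * sqrt 2) * exp (log_branch c w)).
  assert (hF : is_derive F (/ 2) (F (/ 2) * (- (4 * c)))).
  { unfold F, log_branch. auto_derive; [lra | unfold Rminus; field; lra]. }
  assert (hd0 : d = 0).
  { apply (is_derive_reflection_symmetric (fW sigma) (/ 2)); [| exact hd].
    assert (hhalf : 0 < / 2) by lra.
    exists (mkposreal _ hhalf); intros t ht.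
    apply Rabs_lt_between' in ht; simpl in ht.
    replace (2 * / 2 - t) with (1 - t) by field.
    apply fW_sym. lra. }
  assert (hslope : d = F (/ 2) * (- (4 * c))).
  { apply (is_derive_eq_of_right_eq (fW sigma) F (/ 2) (/ 2)); [lra | | exact hd | exact hF].
    intros t ht. apply fW_right_branch. lra. }
  assert (0 < F (/ 2)).
  { apply Rmult_lt_0_compat; [apply Rinv_0_lt_compat, Rmult_lt_0_compat; lra | apply exp_pos]. }
  nra.
Qed.

End Density.

Theorem theorem3 (sigma : R) (hs : 0 < sigma) :
  (sigma <= sqrt 2 ->
     (forall x y, 0 < x -> x < y -> y <= / 2 -> fW sigma x < fW sigma y) /\
     (forall x y, / 2 <= x -> x < y -> y < 1 -> fW sigma y < fW sigma x)) /\
  (sqrt 2 < sigma ->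
     0 < w_minus sigma /\ w_minus sigma < / 2 /\ / 2 < w_plus sigma /\ w_plus sigma < 1 /\
     (forall x y, 0 < x -> x < y -> y <= w_minus sigma -> fW sigma y < fW sigma x) /\
     (forall x y, w_minus sigma <= x -> x < y -> y <= / 2 -> fW sigma x < fW sigma y) /\
     (forall x y, / 2 <= x -> x < y -> y <= w_plus sigma -> fW sigma y < fW sigma x) /\
     (forall x y, w_plus sigma <= x -> x < y -> y < 1 -> fW sigma x < fW sigma y)) /\
  ~ ex_derive (fW sigma) (/ 2) /\
  (forall w, 0 < w < 1 -> fW sigma (1 - w) = fW sigma w).
Proof.
  assert (hc : 0 < sqrt 2 / sigma) by (apply Rdiv_lt_0_compat; [apply sqrt_lt_R0 |]; lra).
  split; [| split; [| split]].
  - intros hle.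
    assert (1 <= sqrt 2 / sigma) by (apply Rle_div_r; lra).
    split; intros x y **; [apply fW_left_increasing | apply fW_right_decreasing]; lra.
  - intros hlt.
    assert (sqrt 2 / sigma < 1) by (apply -> Rdiv_lt_1; lra).
    unfold w_minus, w_plus.
    rewrite inv_1_plus_exp_2arctanh, inv_1_plus_exp_opp_2arctanh by lra.
    repeat split; try lra; intros x y **;
      [ apply fW_left_decreasing | apply fW_left_increasing
      | apply fW_right_decreasing | apply fW_right_increasing ]; lra.
  - now apply fW_not_derivable_half.
  - intros w hw. now apply fW_sym.
Qed.
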